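(* Let $u_1,\dots,u_m\in\mathbb{R}^d$ and let $F_i(x)=\frac12\|x-u_i\|^2$, so $F(x)=\frac1m\sum_{i=1}^m F_i(x)$ has unique minimizer $x^\star=\frac1m\sum_i u_i$. Run FedAvg (as described in the context) with exact local gradients, initial point $x^0=0$, constant learning rate $\eta\in(0,1)$, $s\ge1$ local steps, and time-invariant link probabilities $p_i^t=p_i\in(0,1]$ for all $t$. Then $$\lim_{T\to\infty}\mathbb{E}[x^T]=\sum_{i=1}^m\frac{p_i u_i\left[1+\sum_{j=2}^m(-1)^{j+1}\frac1j\sum_{S\in\mathcal{B}^i_j}\prod_{z\in S}p_z\right]}{1-\prod_{l=1}^m(1-p_l)},$$ where $\mathcal{B}^i_j=\{S\subseteq[m]\setminus\{i\}:\ |S|=j-1\}$.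
   Context: FedAvg with unreliable uplinks: there are $m$ clients and a server holding $x^t$. In each round $t$, client $i$'s uplink is active with probability $p_i^t$, independently across clients and rounds; $\mathcal{A}^t$ is the set of clients with active uplinks. Each client starts from the current server model $x^t$ and performs $s$ steps of gradient descent with exact gradients, $y_{k+1}=y_k-\eta\nabla F_i(y_k)$, $y_0=x^t$, obtaining $y_s^{(i)}$. If $\mathcal{A}^t\neq\emptyset$ the server sets $x^{t+1}=\frac{1}{|\mathcal{A}^t|}\sum_{i\in\mathcal{A}^t}y_s^{(i)}$; otherwise $x^{t+1}=x^t$. *)

From HB Require Import structures.
From mathcomp Require Import all_boot all_order all_algebra.
From mathcomp Require Import all_classical all_reals all_analysis.
Set Implicit Arguments. Unset Strict Implicit. Unset Printing Implicit Defensive.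
Import Order.TTheory GRing.Theory Num.Theory.
Local Open Scope ring_scope.

Section FedAvg.
Variables (R : realType) (m d : nat).

Definition Fi (u : 'I_m -> 'rV[R]_d) (i : 'I_m) (x : 'rV[R]_d) : R :=
  2^-1 * \sum_(k < d) (x 0 k - u i 0 k) ^+ 2.

Definition gradFi (u : 'I_m -> 'rV[R]_d) (i : 'I_m) (x : 'rV[R]_d) : 'rV[R]_d :=
  x - u i.

Definition local_gd (u : 'I_m -> 'rV[R]_d) (eta : R) (s : nat) (i : 'I_m)
  (x : 'rV[R]_d) : 'rV[R]_d :=
  iter s (fun y => y - eta *: gradFi u i y) x.

Definition fedavg_step (u : 'I_m -> 'rV[R]_d) (eta : R) (s : nat)
  (A : {set 'I_m}) (x : 'rV[R]_d) : 'rV[R]_d :=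
  if A == finset.set0 then x
  else (#|A|%:R)^-1 *: \sum_(i in A) local_gd u eta s i x.

Definition fedavg_run (u : 'I_m -> 'rV[R]_d) (eta : R) (s : nat)
  (As : seq {set 'I_m}) (x0 : 'rV[R]_d) : 'rV[R]_d :=
  foldl (fun x A => fedavg_step u eta s A x) x0 As.

(* Probability that the active set equals A when client i is active with
   probability p i, independently across clients. *)
Definition active_prob (p : 'I_m -> R) (A : {set 'I_m}) : R :=
  (\prod_(i in A) p i) * \prod_(i in ~: A) (1 - p i).

(* E[x^T]: expectation over the T independent rounds (time-invariant p). *)
Definition expected_iterate (u : 'I_m -> 'rV[R]_d) (eta : R) (s : nat)
  (p : 'I_m -> R) (x0 : 'rV[R]_d) (T : nat) : 'rV[R]_d :=
  \sum_(As : T.-tuple {set 'I_m})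
     (\prod_(A <- As) active_prob p A) *: fedavg_run u eta s As x0.

Definition fedavg_limit (u : 'I_m -> 'rV[R]_d) (p : 'I_m -> R) : 'rV[R]_d :=
  \sum_(i < m)
    ((p i * (1 + \sum_(2 <= j < m.+1)
         (-1) ^+ j.+1 * (j%:R)^-1 *
         \sum_(S : {set 'I_m} | (i \notin S) && (#|S| == j.-1)%N)
            \prod_(z in S) p z))
     / (1 - \prod_(l < m) (1 - p l))) *: u i.

End FedAvg.

From mathcomp Require Import all_boot all_order all_algebra.
From mathcomp Require Import all_classical all_reals all_analysis.
From mathcomp Require Import ring lra.
Import Order.TTheory GRing.Theory Num.Theory numFieldNormedType.Exports.
Set Implicit Arguments.
Unset Strict Implicit.
Unset Printing Implicit Defensive.
Local Open Scope ring_scope.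

(* Every round is affine in the server model: with probability
   q0 = prod_l (1 - p_l) no uplink is active and x is kept, otherwise
   x |-> c x + (1 - c) avg_A u with c = (1 - eta)^s.  Hence
   E[x^(T+1)] = r E[x^T] + (1 - c) b with r = q0 + c (1 - q0) in [0, 1) and
   b = E[avg_A u; A <> {}], so E[x^T] -> b / (1 - q0).  The weight of u_i in b
   is E[1/|A|; i in A] = p_i E[1/(1 + N_i)], where N_i counts the other active
   clients; Newton's expansion E[h(N)] = sum_S prod_(k in S) p_k (Delta^|S| h)(0)
   of a Poisson-binomial mean, with Delta^n (k |-> 1/(k+1)) (0) = (-1)^n/(n+1),
   turns it into the inclusion-exclusion formula. *)

Definition fdiff {V : zmodType} (h : nat -> V) (k : nat) : V := h k.+1 - h k.

Section FinsetLemmas.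
Variable T : finType.

Lemma finset_ind (P : {set T} -> Prop) :
  P finset.set0 ->
  (forall (a : T) (Y : {set T}), a \notin Y -> P Y -> P (a |: Y)) ->
  forall X, P X.
Proof.
move=> P0 PU1 X; move: {2}#|X| (erefl #|X|) => n; elim: n X => [|n IH] X cX.
  by rewrite (cards0_eq cX).
have /set0Pn [a aX] : X != finset.set0 by rewrite -card_gt0 cX.
rewrite -(finset.setD1K aX); apply: PU1; first by rewrite setD11.
by apply: IH; move: cX; rewrite (cardsD1 a) aX => -[].
Qed.

Lemma setU1D1_eq (a : T) (S : {set T}) : ((a |: S) :\ a == S) = (a \notin S).
Proof.
case: (boolP (a \in S)) => aS; last by rewrite setU1K ?eqxx.
by apply/negbTE/eqP => eS; move: aS; rewrite -eS setD11.
Qed.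

Lemma subsetC1 (a : T) (S : {set T}) : (S \subset ~: [set a]) = (a \notin S).
Proof. by rewrite finset.subsetC finset.sub1set inE. Qed.

Lemma big_subset_setU1 (V : nmodType) (a : T) (Y : {set T}) (F : {set T} -> V) :
  a \notin Y ->
  \sum_(S : {set T} | S \subset a |: Y) F S =
  \sum_(S : {set T} | S \subset Y) F S + \sum_(S : {set T} | S \subset Y) F (a |: S).
Proof.
move=> aY; have subY (S : {set T}) : (S \subset Y) = (S \subset a |: Y) && (a \notin S).
  by rewrite -subsetD1 setU1K.
rewrite (bigID (fun S : {set T} => a \in S)) /= addrC; congr (_ + _).
  by apply: eq_bigl => S; rewrite subY.
rewrite (reindex_onto (fun S : {set T} => a |: S) (fun S : {set T} => S :\ a)) /=;
  last first.
  by move=> S /andP[_ aS]; rewrite finset.setD1K.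
apply: eq_bigl => S.
by rewrite setU11 setU1D1_eq finset.subUset finset.sub1set setU11 andbT subY.
Qed.

End FinsetLemmas.

Section PoissonBinomial.
Variables (R : comRingType) (T : finType) (p : T -> R).

Definition poisson_binomial_mean (X : {set T}) (h : nat -> R) : R :=
  \sum_(S : {set T} | S \subset X)
     (\prod_(k in S) p k * \prod_(k in X :\: S) (1 - p k)) * h #|S|.

Definition newton_series (X : {set T}) (h : nat -> R) : R :=
  \sum_(S : {set T} | S \subset X) \prod_(k in S) p k * iter #|S| fdiff h 0%N.

Lemma poisson_binomial_meanU1 (a : T) (Y : {set T}) (h : nat -> R) : a \notin Y ->
  poisson_binomial_mean (a |: Y) h =
  (1 - p a) * poisson_binomial_mean Y h + p a * poisson_binomial_mean Y (fun k => h k.+1).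
Proof.
move=> aY; rewrite /poisson_binomial_mean big_subset_setU1 // !mulr_sumr.
congr (_ + _); apply: eq_bigr => S /fintype.subsetP/(_ a)/contra/(_ aY) aS.
  have -> : (a |: Y) :\: S = a |: (Y :\: S).
    by apply/setP => x; rewrite !inE; case: eqVneq => [->|]; rewrite ?aS.
  by rewrite big_setU1 ?inE ?(negbTE aY) ?andbF //= mulrCA -!mulrA.
have -> : (a |: Y) :\: (a |: S) = Y :\: S.
  by apply/setP => x; rewrite !inE; case: eqVneq => [->|] /=; rewrite ?(negbTE aY) ?andbF.
by rewrite big_setU1 //= cardsU1 aS -!mulrA.
Qed.

Lemma poisson_binomial_mean_fdiff (Y : {set T}) (h : nat -> R) :
  poisson_binomial_mean Y (fdiff h) =
  poisson_binomial_mean Y (fun k => h k.+1) - poisson_binomial_mean Y h.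
Proof. by rewrite -sumrB; apply: eq_bigr => S _; rewrite mulrBr. Qed.

Lemma newton_seriesU1 (a : T) (Y : {set T}) (h : nat -> R) : a \notin Y ->
  newton_series (a |: Y) h = newton_series Y h + p a * newton_series Y (fdiff h).
Proof.
move=> aY; rewrite /newton_series big_subset_setU1 // mulr_sumr; congr (_ + _).
apply: eq_bigr => S /fintype.subsetP/(_ a)/contra/(_ aY) aS.
by rewrite big_setU1 //= cardsU1 aS iterSr mulrA.
Qed.

Lemma poisson_binomial_meanE (X : {set T}) (h : nat -> R) :
  poisson_binomial_mean X h = newton_series X h.
Proof.
elim/finset_ind: X h => [|a Y aY IH] h.
  rewrite /poisson_binomial_mean /newton_series.
  rewrite !(big_pred1 finset.set0) => [|S|S]; rewrite ?finset.subset0 //.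
  by rewrite finset.setD0 !big_set0 cards0 mul1r.
rewrite poisson_binomial_meanU1 // newton_seriesU1 // -!IH.
by rewrite poisson_binomial_mean_fdiff; ring.
Qed.

End PoissonBinomial.

Section HarmonicDifferences.
Variable R : numFieldType.

Lemma iter_fdiff_inv_succ n k :
  iter n fdiff (fun k => (k.+1)%:R^-1 : R) k =
  (-1) ^+ n * (n`! * k`!)%:R / ((n + k).+1)`!%:R.
Proof.
have fact_neq0 j : (j`!)%:R != 0 :> R by rewrite pnatr_eq0 -lt0n fact_gt0.
elim: n k => [|n IH] k.
  by rewrite /= expr0 mul1r mul1n add0n factS natrM invfM mulrCA mulfV ?mulr1.
rewrite iterS /fdiff !IH addnS addSn !factS !natrM exprS.
by field; rewrite fact_neq0 -!natrD nat1r !pnatr_eq0 !addSn.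
Qed.

Lemma iter_fdiff_inv_succ0 n :
  iter n fdiff (fun k => (k.+1)%:R^-1 : R) 0%N = (-1) ^+ n / n.+1%:R.
Proof.
rewrite iter_fdiff_inv_succ fact0 muln1 addn0 factS natrM.
by field; rewrite nat1r !pnatr_eq0 -!lt0n fact_gt0.
Qed.

End HarmonicDifferences.

Lemma sum_by_card (V : nmodType) (T : finType) (n : nat) (P : pred {set T})
    (F : {set T} -> V) :
  (forall S, P S -> #|S| < n)%N ->
  \sum_(S | P S) F S = \sum_(0 <= k < n) \sum_(S | P S && (#|S| == k)) F S.
Proof.
move=> card_lt; rewrite -(exchange_big_dep xpredT) //=; apply: eq_bigr => S PS.
rewrite (eq_bigl (pred1 #|S|)) => [|k]; last by rewrite /= eq_sym.
rewrite -big_filter filter_pred1_uniq ?iota_uniq ?mem_iota ?add0n ?subn0 ?card_lt //.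
by rewrite big_cons big_nil addr0.
Qed.

Lemma prod_1subr_lt1 (R : realDomainType) (I : finType) (p : I -> R) (i : I) :
  (forall j, 0 <= p j) -> (forall j, p j <= 1) -> 0 < p i ->
  \prod_j (1 - p j) < 1.
Proof.
move=> p_ge0 p_le1 p_i_gt0; rewrite (bigD1 i) //=.
have rest_ge0 : 0 <= \prod_(j | j != i) (1 - p j).
  by apply: prodr_ge0 => j _; rewrite subr_ge0.
have rest_le1 : \prod_(j | j != i) (1 - p j) <= 1.
  by apply: prodr_ile1 => j _; rewrite subr_ge0 p_le1 /= lerBlDr lerDl.
nra.
Qed.

Local Open Scope classical_set_scope.

Lemma cvg_geometric_affine (R : archiRealFieldType) (V : normedModType R)
    (r : R) (L : V) :
  `|r| < 1 -> (fun T => (1 - r ^+ T) *: L) @ \oo --> L.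
Proof.
move=> r_lt1; rewrite -[X in _ --> X]scale1r -[X in X *: L]subr0.
by apply: cvgZl; apply: cvgB; [exact: cvg_cst | exact: cvg_expr].
Qed.

Section ActiveSets.
Variables (R : realType) (m : nat) (p : 'I_m -> R).

Lemma sum_active_prob : \sum_(A : {set 'I_m}) active_prob p A = 1.
Proof.
transitivity (\prod_(i < m) (p i + (1 - p i))); last first.
  by rewrite big1 // => i _; rewrite addrC subrK.
rewrite bigA_distr; apply: eq_bigr => A _.
rewrite /active_prob [RHS](bigID (mem A)) /=; congr (_ * _).
  by apply: eq_bigr => i ->.
by apply: eq_big => [i|i]; rewrite ?inE // => /negbTE ->.
Qed.

Lemma sum_active_prob_mem (i : 'I_m) (g : nat -> R) :
  \sum_(A : {set 'I_m} | i \in A) active_prob p A * g #|A| =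
  p i * poisson_binomial_mean p (~: [set i]) (fun k => g k.+1).
Proof.
rewrite (reindex_onto (fun S : {set 'I_m} => i |: S) (fun A => A :\ i)) /=; last first.
  by move=> A iA; rewrite finset.setD1K.
rewrite /poisson_binomial_mean mulr_sumr; apply: eq_big => [S|S].
  by rewrite setU11 setU1D1_eq subsetC1.
rewrite setU1D1_eq /active_prob => /andP[_ iS].
have -> : ~: (i |: S) = ~: [set i] :\: S.
  by apply/setP => x; rewrite !inE negb_or andbC.
by rewrite big_setU1 //= cardsU1 iS add1n -!mulrA.
Qed.

Lemma sum_active_prob_div_card (i : 'I_m) :
  \sum_(A : {set 'I_m} | i \in A) active_prob p A / #|A|%:R =
  p i * \sum_(S : {set 'I_m} | i \notin S)
          \prod_(k in S) p k * ((-1) ^+ #|S| / #|S|.+1%:R).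
Proof.
rewrite (sum_active_prob_mem i (fun k => k%:R^-1)) poisson_binomial_meanE.
congr (_ * _); apply: eq_big => [S|S _]; last by rewrite iter_fdiff_inv_succ0.
by rewrite subsetC1.
Qed.

Lemma sum_notin_by_card (i : 'I_m) :
  \sum_(S : {set 'I_m} | i \notin S)
     \prod_(k in S) p k * ((-1) ^+ #|S| / #|S|.+1%:R) =
  1 + \sum_(2 <= j < m.+1) (-1) ^+ j.+1 * (j%:R)^-1 *
        \sum_(S : {set 'I_m} | (i \notin S) && (#|S| == j.-1)%N) \prod_(z in S) p z.
Proof.
have m_gt0 : (0 < m)%N := leq_ltn_trans (leq0n i) (ltn_ord i).
rewrite (@sum_by_card _ _ m) => [|S iS]; last first.
  rewrite -subsetC1 in iS.
  apply: leq_ltn_trans (subset_leq_card iS) _.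
  by rewrite cardsC1 card_ord prednK.
rewrite big_ltn // [in RHS]big_add1 /=; congr (_ + _).
  rewrite (big_pred1 finset.set0) => [|S]; last first.
    by rewrite /= cards_eq0 andb_idl // => /eqP ->; rewrite inE.
  by rewrite big_set0 cards0 expr0 mul1r invr1 mulr1.
apply: eq_bigr => k _; rewrite mulr_sumr; apply: eq_bigr => S /andP[_ /eqP ->].
by rewrite !exprS !mulN1r opprK mulrC.
Qed.

End ActiveSets.

Section FedAvgDynamics.
Variables (R : realType) (m d : nat) (u : 'I_m -> 'rV[R]_d) (eta : R) (s : nat)
  (p : 'I_m -> R).

Definition gd_rate : R := (1 - eta) ^+ s.

Definition client_mean (A : {set 'I_m}) : 'rV[R]_d :=
  (#|A|%:R)^-1 *: \sum_(i in A) u i.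

Definition idle_prob : R := active_prob p finset.set0.

Definition mean_target : 'rV[R]_d :=
  \sum_(A : {set 'I_m}) active_prob p A *: client_mean A.

Definition round_rate : R := idle_prob + gd_rate * (1 - idle_prob).

Definition fedavg_fixpoint : 'rV[R]_d := (1 - idle_prob)^-1 *: mean_target.

Lemma local_gdE i x : local_gd u eta s i x = gd_rate *: x + (1 - gd_rate) *: u i.
Proof.
rewrite /local_gd /gd_rate; elim: s => [|n IH] /=.
  by rewrite expr0 scale1r subrr scale0r addr0.
by rewrite IH /gradFi; apply/rowP => k; rewrite !mxE exprS; ring.
Qed.

Lemma fedavg_stepE (A : {set 'I_m}) x : A != finset.set0 ->
  fedavg_step u eta s A x = gd_rate *: x + (1 - gd_rate) *: client_mean A.
Proof.
move=> A_neq0; rewrite /fedavg_step (negbTE A_neq0) /client_mean.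
have card_neq0 : (#|A|%:R : R) != 0 by rewrite pnatr_eq0 cards_eq0.
under eq_bigr do rewrite local_gdE.
rewrite big_split /= sumr_const -scaler_sumr scalerDr -[gd_rate *: x *+ _]scaler_nat.
by rewrite !scalerA mulrA mulVf // mul1r mulrC.
Qed.

Lemma idle_probE : idle_prob = \prod_(l < m) (1 - p l).
Proof.
rewrite /idle_prob /active_prob big_set0 mul1r finset.setC0.
by apply: eq_bigl => l; rewrite inE.
Qed.

Lemma expected_stepE x :
  \sum_(A : {set 'I_m}) active_prob p A *: fedavg_step u eta s A x =
  round_rate *: x + (1 - gd_rate) *: mean_target.
Proof.
have busy_prob : \sum_(A | A != finset.set0) active_prob p A = 1 - idle_prob.
  have := sum_active_prob p; rewrite (bigD1 finset.set0) //= => <-.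
  by rewrite /idle_prob addrAC subrr add0r.
have mean_target_busy : mean_target =
    \sum_(A | A != finset.set0) active_prob p A *: client_mean A.
  by rewrite /mean_target (bigD1 finset.set0) //= /client_mean big_set0 !scaler0 add0r.
rewrite (bigD1 finset.set0) //= {1}/fedavg_step eqxx.
under eq_bigr => A A_neq0 do rewrite fedavg_stepE // scalerDr scalerA.
rewrite big_split /= -scaler_suml -mulr_suml busy_prob addrA -scalerDl mulrC.
rewrite mean_target_busy scaler_sumr; congr (_ + _).
by apply: eq_bigr => A _; rewrite !(scalerA _ _ (client_mean A)) mulrC.
Qed.

Lemma expected_iterate0 x : expected_iterate u eta s p x 0 = x.
Proof.
rewrite /expected_iterate (big_pred1 [tuple]) ?big_nil ?scale1r // => t.
by apply/esym/eqP; exact: tuple0.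
Qed.

Lemma expected_iterateS T x :
  expected_iterate u eta s p x T.+1 =
  \sum_(A : {set 'I_m}) active_prob p A *:
     expected_iterate u eta s p (fedavg_step u eta s A x) T.
Proof.
rewrite /expected_iterate (reindex (fun q : {set 'I_m} * T.-tuple {set 'I_m} =>
  [tuple of q.1 :: q.2])) /=; last first.
  exists (fun t : T.+1.-tuple {set 'I_m} => (thead t, [tuple of behead t])).
    by case=> a t _; congr pair; apply: val_inj.
  by move=> t _; rewrite [in RHS](tuple_eta t).
rewrite -(pair_bigA _ (fun A (t : T.-tuple _) => (\prod_(B <- A :: t) active_prob p B) *:
  fedavg_run u eta s t (fedavg_step u eta s A x))).
apply: eq_bigr => A _; rewrite scaler_sumr; apply: eq_bigr => t _.
by rewrite big_cons scalerA.
Qed.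

Lemma expected_iterateE T x : idle_prob != 1 ->
  expected_iterate u eta s p x T =
  round_rate ^+ T *: x + (1 - round_rate ^+ T) *: fedavg_fixpoint.
Proof.
move=> idle_neq1; elim: T x => [|T IH] x.
  by rewrite expected_iterate0 expr0 scale1r subrr scale0r addr0.
rewrite expected_iterateS; under eq_bigr do rewrite IH scalerDr scalerA.
rewrite big_split /= -scaler_suml sum_active_prob scale1r.
under eq_bigr do rewrite mulrC -scalerA.
rewrite -scaler_sumr expected_stepE /fedavg_fixpoint /round_rate exprS.
apply/rowP => k; rewrite !mxE; field.
by rewrite subr_eq0 eq_sym.
Qed.

Lemma mean_targetE : mean_target =
  \sum_(i < m) (\sum_(A : {set 'I_m} | i \in A) active_prob p A / #|A|%:R) *: u i.
Proof.
rewrite /mean_target /client_mean.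
under eq_bigr do rewrite scalerA scaler_sumr.
rewrite (exchange_big_dep xpredT) //=; apply: eq_bigr => i _.
by rewrite scaler_suml.
Qed.

Lemma fedavg_limitE : fedavg_limit u p = fedavg_fixpoint.
Proof.
rewrite /fedavg_fixpoint mean_targetE scaler_sumr; apply: eq_bigr => i _.
by rewrite scalerA sum_active_prob_div_card sum_notin_by_card idle_probE mulrC.
Qed.

End FedAvgDynamics.

Theorem proposition1 (R : realType) (m d : nat) (u : 'I_m -> 'rV[R]_d)
  (eta : R) (s : nat) (p : 'I_m -> R)
  (hm : (0 < m)%N) (heta0 : 0 < eta) (heta1 : eta < 1) (hs : (1 <= s)%N)
  (hp0 : forall i, 0 < p i) (hp1 : forall i, p i <= 1) :
  (fun T : nat => expected_iterate u eta s p 0 T) @ \oo --> fedavg_limit u p.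
Proof.
have p_ge0 j : 0 <= p j := ltW (hp0 j).
have idle_ge0 : 0 <= idle_prob p.
  by rewrite idle_probE; apply: prodr_ge0 => l _; rewrite subr_ge0.
have idle_lt1 : idle_prob p < 1.
  by rewrite idle_probE (prod_1subr_lt1 (i := Ordinal hm)).
have rate_ge0 : 0 <= gd_rate eta s by rewrite exprn_ge0 // subr_ge0 ltW.
have rate_lt1 : gd_rate eta s < 1.
  by rewrite exprn_ilt1 -?lt0n ?subr_ge0 ?ltW // ltrBlDr ltrDl.
have round_ge0 : 0 <= round_rate eta s p by rewrite /round_rate; nra.
have round_lt1 : round_rate eta s p < 1 by rewrite /round_rate; nra.
rewrite fedavg_limitE.
under eq_fun do rewrite expected_iterateE ?lt_eqF // scaler0 add0r.
by apply: cvg_geometric_affine; rewrite ger0_norm.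
Qed.
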